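(* Let the parameters satisfy $\alpha\in(0,1]$, $\alpha_1,\alpha_2\in(0,2]$ and either (B1) $\alpha_1,\alpha_2\in(0,2)$, or (B2) $\alpha\in(0,1)$ with $\alpha_1\neq 2$ or $\alpha_2\neq 2$. Let $\mathcal{M},\mathcal{N}\subset\mathbb{R}^n$ be two manifolds that are $\mathcal{C}^k$-smooth ($k\geq 2$) around a point $\bar{x}\in\mathcal{M}\cap\mathcal{N}$, such that $\mathcal{M}\cap\mathcal{N}$ is a $\mathcal{C}^k$-smooth manifold around $\bar{x}$ and $\mathrm{T}_{\mathcal{M}\cap\mathcal{N}}(\bar{x})=\mathrm{T}_{\mathcal{M}}(\bar{x})\cap\mathrm{T}_{\mathcal{N}}(\bar{x})$. Then \[ \sigma(S_{\mathrm{T}(\bar{x})})\coloneqq\|S_{\mathrm{T}(\bar{x})}-\Pi_{\mathrm{T}_{\mathcal{M}}(\bar{x})\cap\mathrm{T}_{\mathcal{N}}(\bar{x})}\|<1, \] where $S_{\mathrm{T}(\bar{x})}=\alpha\,\Pi^{\alpha_2}_{\mathrm{T}_{\mathcal{M}}(\bar{x})}\Pi^{\alpha_1}_{\mathrm{T}_{\mathcal{N}}(\bar{x})}+(1-\alpha)I$.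
   Context: For a closed nonempty set $C$, $\Pi_C$ is the projection and $\Pi_C^{\alpha}\coloneqq(1-\alpha)I+\alpha\Pi_C$ is the relaxed projection; $\|\cdot\|$ is the operator norm. The tangent space of a manifold $\mathcal{M}$ locally defined by $\{x:F(x)=0\}$ ($F$ of class $\mathcal{C}^k$ with surjective derivative) is $\mathrm{T}_{\mathcal{M}}(x)=\ker \mathrm{J}F(x)$. *)

From HB Require Import structures.
From mathcomp Require Import all_boot all_order all_algebra.
From mathcomp Require Import all_classical all_reals all_analysis.
Set Implicit Arguments. Unset Strict Implicit. Unset Printing Implicit Defensive.
Import Order.TTheory GRing.Theory Num.Theory.
Import numFieldNormedType.Exports.
Local Open Scope classical_set_scope.
Local Open Scope ring_scope.

Definition enorm (R : realType) (n : nat) (v : 'rV[R]_n) : R :=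
  Num.sqrt (\sum_(i < n) v ord0 i ^+ 2).

(* C^k on a set U: k-fold differentiability with continuous k-th derivative;
   the derivative is represented by its (flattened) Jacobian matrix. *)
Fixpoint Ck (R : realType) (n : nat) (k : nat) (U : set 'rV[R]_n)
    (m : nat) (f : 'rV[R]_n -> 'rV[R]_m) {struct k} : Prop :=
  match k with
  | 0 => forall x, U x -> {for x, continuous f}
  | k'.+1 => (forall x, U x -> differentiable f x) /\
             Ck k' U (fun x => mxvec ('J f x))
  end.

Definition local_eq (R : realType) (n k : nat) (M : set 'rV[R]_n)
    (x : 'rV[R]_n) (U : set 'rV[R]_n) (m : nat) (F : 'rV[R]_n -> 'rV[R]_m) :
    Prop :=
  [/\ open U, U x, Ck k U F,
      (forall y, U y -> forall w : 'rV[R]_m, exists v, 'd F y v = w) &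
      (forall y, U y -> (M y <-> F y = 0))].

(* T is the tangent space T_M(x) = ker JF(x) of the C^k manifold M around x,
   for some local defining function F. *)
Definition tangent_at (R : realType) (n k : nat) (M : set 'rV[R]_n)
    (x : 'rV[R]_n) (T : set 'rV[R]_n) : Prop :=
  exists (U : set 'rV[R]_n) (m : nat) (F : 'rV[R]_n -> 'rV[R]_m),
    local_eq k M x U F /\ T = [set v | 'd F x v = 0].

Definition is_proj (R : realType) (n : nat) (C : set 'rV[R]_n)
    (P : 'rV[R]_n -> 'rV[R]_n) : Prop :=
  forall x, C (P x) /\ forall y, C y -> enorm (x - P x) <= enorm (x - y).

Definition relax (R : realType) (n : nat) (a : R) (P : 'rV[R]_n -> 'rV[R]_n)
    (x : 'rV[R]_n) : 'rV[R]_n := (1 - a) *: x + a *: P x.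

Definition opnorm (R : realType) (n : nat) (A : 'rV[R]_n -> 'rV[R]_n) : R :=
  sup [set enorm (A v) | v in [set v : 'rV[R]_n | enorm v <= 1]].

From HB Require Import structures.
From mathcomp Require Import all_boot all_order all_algebra.
From mathcomp Require Import all_classical all_reals all_analysis.
From mathcomp Require Import ring lra.
Import Order.TTheory GRing.Theory Num.Theory.
Import numFieldNormedType.Exports.
Local Open Scope classical_set_scope.
Local Open Scope ring_scope.

(* Tangent spaces are kernels of derivatives, hence linear subspaces, and
   everything happens in the linear map [S - Pi] with [Pi] the projection onto
   [TM `&` TN].  A relaxed projection satisfies
   |R_a x|^2 = |x|^2 - a (2 - a) |x - P x|^2, and averaging satisfies
   |a y + (1 - a) x|^2 = a |y|^2 + (1 - a) |x|^2 - a (1 - a) |y - x|^2.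
   Hence [S] is nonexpansive, and under (B1) or (B2) the equality |S w| = |w|
   forces [w] into [TM `&` TN].  Since [S] fixes [TM `&` TN], we have
   S v - Pi v = S w with w = v - Pi v orthogonal to [TM `&` TN], so that
   |S v - Pi v| < 1 on the closed unit ball.  The ball is compact, so this
   continuous function attains its maximum there and the operator norm is < 1. *)

Section Dot.
Context {R : realFieldType} {n : nat}.
Implicit Types (u v w : 'rV[R]_n).

Definition dot u v : R := \sum_(i < n) u ord0 i * v ord0 i.

Lemma dotC u v : dot u v = dot v u.
Proof. by apply: eq_bigr => i _; rewrite mulrC. Qed.

Lemma dotDl u v w : dot (u + v) w = dot u w + dot v w.
Proof. by rewrite /dot -big_split; apply: eq_bigr => i _; rewrite mxE mulrDl. Qed.

Lemma dotZl a u v : dot (a *: u) v = a * dot u v.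
Proof. by rewrite /dot mulr_sumr; apply: eq_bigr => i _; rewrite mxE mulrA. Qed.

Lemma dotNl u v : dot (- u) v = - dot u v.
Proof. by rewrite -scaleN1r dotZl mulN1r. Qed.

Lemma dotBl u v w : dot (u - v) w = dot u w - dot v w.
Proof. by rewrite dotDl dotNl. Qed.

Lemma dotDr u v w : dot w (u + v) = dot w u + dot w v.
Proof. by rewrite dotC dotDl ![dot _ w]dotC. Qed.

Lemma dotZr a u v : dot v (a *: u) = a * dot v u.
Proof. by rewrite dotC dotZl dotC. Qed.

Lemma dotBr u v w : dot w (u - v) = dot w u - dot w v.
Proof. by rewrite !(dotC w) dotBl. Qed.

Lemma dot0l v : dot 0 v = 0.
Proof. by rewrite -(scale0r 0) dotZl mul0r. Qed.

Lemma dot_ge0 v : 0 <= dot v v.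
Proof. by apply: sumr_ge0 => i _; rewrite -expr2 sqr_ge0. Qed.

Lemma dot_eq0 v : (dot v v == 0) = (v == 0).
Proof.
apply/eqP/eqP => [v0|->]; last exact: dot0l.
apply/rowP => j; rewrite mxE.
have sq_ge0 i : xpredT i -> 0 <= v ord0 i * v ord0 i.
  by rewrite -expr2 sqr_ge0.
move: (psumr_eq0P sq_ge0 v0) => /(_ j isT)/eqP.
by rewrite mulf_eq0 orbb (ord1 (0 : 'I_1)) => /eqP.
Qed.

Lemma pmul_dot_eq0 (c : R) v : 0 < c -> c * dot v v = 0 -> v = 0.
Proof. by move=> c_gt0 /eqP; rewrite mulf_eq0 gt_eqF // dot_eq0 => /eqP. Qed.

Lemma dot_add_orth u v : dot u v = 0 -> dot (u + v) (u + v) = dot u u + dot v v.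
Proof. by move=> uv0; rewrite dotDl !dotDr (dotC v u) uv0 addr0 add0r. Qed.

Lemma dot_convex (a : R) u v :
  dot (a *: v + (1 - a) *: u) (a *: v + (1 - a) *: u) =
  a * dot v v + (1 - a) * dot u u - a * (1 - a) * dot (v - u) (v - u).
Proof. by rewrite !dotBl !dotBr !dotDl !dotDr !dotZl !dotZr (dotC u v); ring. Qed.

End Dot.

Lemma linear_le_quadratic_eq0 (R : realFieldType) (d q : R) :
  0 <= q -> (forall t, 2 * t * d <= t ^+ 2 * q) -> d = 0.
Proof.
move=> q_ge0 le_dq; pose s := (q + 1)^-1.
have s_gt0 : 0 < s by rewrite invr_gt0; lra.
have q1_neq0 : q + 1 != 0 by rewrite gt_eqF //; lra.
have sq : s * q = 1 - s by rewrite /s; field.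
have := le_dq (d * s).
rewrite (_ : (d * s) ^+ 2 * q = d * d * s * (s * q)); last by ring.
rewrite sq => le_ds.
have dd_le0 : d * d * (s * (1 + s)) <= 0 by lra.
rewrite pmulr_lle0 in dd_le0; last by nra.
by apply/eqP; rewrite -sqrf_eq0 eq_le sqr_ge0 andbT expr2.
Qed.

Section Euclid.
Context {R : realType} {n : nat}.
Implicit Types (v : 'rV[R]_n).

Lemma enormE v : enorm v = Num.sqrt (dot v v).
Proof. by rewrite /enorm /dot; under eq_bigr do rewrite expr2. Qed.

Lemma enorm_le1 v : (enorm v <= 1) = (dot v v <= 1).
Proof. by rewrite enormE -{1}sqrtr1 ler_sqrt ?ler01. Qed.

Lemma enorm_lt1 v : (enorm v < 1) = (dot v v < 1).
Proof. by rewrite enormE -{1}sqrtr1 ltr_sqrt ?ltr01. Qed.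

End Euclid.

Section Projection.
Context {R : realType} {n : nat}.
Implicit Types (x y z u : 'rV[R]_n).

Definition is_subspace (T : set 'rV[R]_n) : Prop :=
  [/\ T 0, forall x y, T x -> T y -> T (x + y) & forall a x, T x -> T (a *: x)].

Lemma tangent_at_subspace k (M : set 'rV[R]_n) x T :
  tangent_at k M x T -> is_subspace T.
Proof.
case=> U [m [F [_ ->]]]; split => /=.
- exact: linear0.
- by move=> y z Fy Fz; rewrite linearD Fy Fz addr0.
- by move=> a y Fy; rewrite linearZ_LR Fy scaler0.
Qed.

Lemma is_subspaceI {A B : set 'rV[R]_n} :
  is_subspace A -> is_subspace B -> is_subspace (A `&` B).
Proof.
case=> A0 AD AZ [B0 BD BZ]; split => //.
- by move=> x y [? ?] [? ?]; split; [apply: AD | apply: BD].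
- by move=> a x [? ?]; split; [apply: AZ | apply: BZ].
Qed.

Lemma relaxE a (P : 'rV[R]_n -> 'rV[R]_n) x : relax a P x = x - a *: (x - P x).
Proof. by rewrite /relax scalerBr scalerBl scale1r addrAC -addrA -opprB -scalerBr. Qed.

Lemma relax_fixE a (P : 'rV[R]_n -> 'rV[R]_n) x :
  a != 0 -> (relax a P x == x) = (P x == x).
Proof.
move=> a_neq0; rewrite relaxE -subr_eq0 addrAC subrr add0r oppr_eq0.
by rewrite scaler_eq0 (negbTE a_neq0) subr_eq0 eq_sym.
Qed.

Context {T : set 'rV[R]_n} {P : 'rV[R]_n -> 'rV[R]_n}.
Hypotheses (T_sub : is_subspace T) (P_proj : is_proj T P).

Lemma proj_mem x : T (P x).
Proof. by case: (P_proj x). Qed.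

(* As [P x + t *: y] lies in [T], [t |-> |x - P x - t *: y|^2] is minimal at [t = 0]. *)
Lemma proj_orth x y : T y -> dot (x - P x) y = 0.
Proof.
case: T_sub => _ TD TZ Ty; have [_ P_min] := P_proj x.
apply: linear_le_quadratic_eq0 (dot_ge0 y) _ => t.
have := P_min _ (TD _ _ (proj_mem x) (TZ t _ Ty)).
rewrite !enormE ler_sqrt ?dot_ge0 // opprD addrA; move: (x - P x) => r.
by rewrite !dotBl !dotBr !dotZl !dotZr (dotC y r); lra.
Qed.

Lemma proj_eq x z : T z -> (forall y, T y -> dot (x - z) y = 0) -> P x = z.
Proof.
case: T_sub => _ TD TZ Tz orth_z.
have T_Pz : T (P x - z) by rewrite -scaleN1r; apply: TD (proj_mem x) (TZ _ _ Tz).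
have PxzE : P x - z = (x - z) - (x - P x) by rewrite opprB [RHS]addrC addrA subrK.
have : dot (P x - z) (P x - z) == 0.
  by rewrite {1}PxzE dotBl orth_z // proj_orth // subrr.
by rewrite dot_eq0 subr_eq0 => /eqP.
Qed.

Lemma proj_id u : T u -> P u = u.
Proof. by move=> Tu; apply: proj_eq => // y _; rewrite subrr dot0l. Qed.

Lemma proj_linear : linear P.
Proof.
case: T_sub => _ TD TZ a u v; apply: proj_eq.
  exact: TD (TZ _ _ (proj_mem u)) (proj_mem v).
move=> y Ty; rewrite opprD addrACA -scalerBr dotDl dotZl !proj_orth //.
by rewrite mulr0 addr0.
Qed.

Lemma dot_relax a x :
  dot (relax a P x) (relax a P x) = dot x x - a * (2 - a) * dot (x - P x) (x - P x).
Proof.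
have x_PxE : dot x (x - P x) = dot (x - P x) (x - P x).
  by rewrite [RHS]dotBl (dotC (P x)) (proj_orth _ _ (proj_mem x)) subr0.
rewrite relaxE; move: (x - P x) x_PxE => r x_rE.
by rewrite !dotBl !dotBr !dotZl !dotZr (dotC r x) x_rE; ring.
Qed.

Lemma relax_id a u : T u -> relax a P u = u.
Proof. by move=> Tu; rewrite relaxE proj_id // subrr scaler0 subr0. Qed.

End Projection.

Section AveragedRelaxedProjections.
Context {R : realType} {n : nat}.
Context {TM TN : set 'rV[R]_n} {PM PN : 'rV[R]_n -> 'rV[R]_n}.
Hypotheses (TM_sub : is_subspace TM) (TN_sub : is_subspace TN).
Hypotheses (PM_proj : is_proj TM PM) (PN_proj : is_proj TN PN).
Variables (al a1 a2 : R).
Implicit Types (u v w : 'rV[R]_n).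

HB.instance Definition _ := GRing.isLinear.Build R _ _ _ PM (proj_linear TM_sub PM_proj).
HB.instance Definition _ := GRing.isLinear.Build R _ _ _ PN (proj_linear TN_sub PN_proj).

(* The operator S_T of the paper, written as a combination of linear maps so
   that it carries a canonical [{linear _}] structure. *)
Definition avg_relax : {linear 'rV[R]_n -> 'rV[R]_n} :=
  al \*: (((1 - a2) \*: idfun \+ a2 \*: PM) \o ((1 - a1) \*: idfun \+ a1 \*: PN))
  \+ (1 - al) \*: idfun.

Lemma avg_relaxE v : avg_relax v = al *: relax a2 PM (relax a1 PN v) + (1 - al) *: v.
Proof. by []. Qed.

Lemma avg_relax_id u : TM u -> TN u -> avg_relax u = u.
Proof.
move=> TMu TNu; rewrite avg_relaxE (relax_id TN_sub PN_proj _ _ TNu).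
by rewrite (relax_id TM_sub PM_proj _ _ TMu) -scalerDl addrC subrK scale1r.
Qed.

Lemma dot_avg_relax w :
  let y1 := relax a1 PN w in let y2 := relax a2 PM y1 in
  dot (avg_relax w) (avg_relax w) = dot w w
    - al * (a1 * (2 - a1)) * dot (w - PN w) (w - PN w)
    - al * (a2 * (2 - a2)) * dot (y1 - PM y1) (y1 - PM y1)
    - al * (1 - al) * dot (y2 - w) (y2 - w).
Proof.
move=> y1 y2; rewrite avg_relaxE dot_convex.
by rewrite (dot_relax TM_sub PM_proj) (dot_relax TN_sub PN_proj); ring.
Qed.

Lemma avg_relax_le w :
  0 <= al <= 1 -> 0 <= a1 <= 2 -> 0 <= a2 <= 2 ->
  dot (avg_relax w) (avg_relax w) <= dot w w.
Proof.
case/andP=> al_ge0 al_le1 /andP[a1_ge0 a1_le2] /andP[a2_ge0 a2_le2].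
have k1 : 0 <= al * (a1 * (2 - a1)) by apply: mulr_ge0; nra.
have k2 : 0 <= al * (a2 * (2 - a2)) by apply: mulr_ge0; nra.
have k3 : 0 <= al * (1 - al) by nra.
rewrite dot_avg_relax /=.
move: (mulr_ge0 k1 (dot_ge0 (w - PN w))).
move: (mulr_ge0 k2 (dot_ge0 (relax a1 PN w - PM (relax a1 PN w)))).
move: (mulr_ge0 k3 (dot_ge0 (relax a2 PM (relax a1 PN w) - w))).
lra.
Qed.

Hypotheses (al_range : 0 < al <= 1) (a1_range : 0 < a1 <= 2) (a2_range : 0 < a2 <= 2).
Hypothesis B1_or_B2 : (a1 < 2 /\ a2 < 2) \/ (al < 1 /\ (a1 != 2 \/ a2 != 2)).

Lemma relax_defects_fixed w :
  let y1 := relax a1 PN w in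
  (a1 < 2 -> PN w = w) -> (a2 < 2 -> PM y1 = y1) -> (al < 1 -> relax a2 PM y1 = w) ->
  PM w = w /\ PN w = w.
Proof.
move=> y1 PNw PMy1 y2w.
have /andP[a1_gt0 a1_le2] := a1_range; have /andP[a2_gt0 a2_le2] := a2_range.
have y1E : (y1 == w) = (PN w == w) by rewrite relax_fixE ?gt_eqF.
have y2E : (relax a2 PM y1 == y1) = (PM y1 == y1) by rewrite relax_fixE ?gt_eqF.
case: B1_or_B2 => [[a1_lt2 a2_lt2] | [al_lt1 [a1_neq2 | a2_neq2]]].
- have y1w : y1 = w by apply/eqP; rewrite y1E PNw.
  by split; [rewrite -{1}y1w PMy1 | exact: PNw].
- have a1_lt2 : a1 < 2 by rewrite lt_neqAle a1_neq2.
  have y1w : y1 = w by apply/eqP; rewrite y1E PNw.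
  have : relax a2 PM y1 == y1 by rewrite y2w // y1w.
  by rewrite y2E y1w => /eqP PMw; split; last exact: PNw.
- have a2_lt2 : a2 < 2 by rewrite lt_neqAle a2_neq2.
  have /eqP y2y1 : relax a2 PM y1 == y1 by rewrite y2E PMy1.
  have y1w : y1 = w by rewrite -y2y1 y2w.
  by split; [rewrite -{1}y1w PMy1 | apply/eqP; rewrite -y1E y1w].
Qed.

Lemma avg_relax_norm_eq w : dot (avg_relax w) (avg_relax w) = dot w w -> TM w /\ TN w.
Proof.
have /andP[al_gt0 al_le1] := al_range; have /andP[a1_gt0 a1_le2] := a1_range.
have /andP[a2_gt0 a2_le2] := a2_range.
have k1 : 0 <= al * (a1 * (2 - a1)) by apply: mulr_ge0; nra.
have k2 : 0 <= al * (a2 * (2 - a2)) by apply: mulr_ge0; nra.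
have k3 : 0 <= al * (1 - al) by nra.
rewrite dot_avg_relax /=; set y1 := relax a1 PN w; set y2 := relax a2 PM y1.
move: (mulr_ge0 k1 (dot_ge0 (w - PN w))) (mulr_ge0 k2 (dot_ge0 (y1 - PM y1))).
move: (mulr_ge0 k3 (dot_ge0 (y2 - w))) => e3_ge0 e1_ge0 e2_ge0 Sw_eq.
have e1 : al * (a1 * (2 - a1)) * dot (w - PN w) (w - PN w) = 0 by lra.
have e2 : al * (a2 * (2 - a2)) * dot (y1 - PM y1) (y1 - PM y1) = 0 by lra.
have e3 : al * (1 - al) * dot (y2 - w) (y2 - w) = 0 by lra.
have [PMw PNw] : PM w = w /\ PN w = w.
  apply: relax_defects_fixed => [a1_lt2 | a2_lt2 | al_lt1].
  - apply/esym/subr0_eq; apply: (pmul_dot_eq0 _ _ _ e1).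
    by rewrite !mulr_gt0 // subr_gt0.
  - apply/esym/subr0_eq; apply: (pmul_dot_eq0 _ _ _ e2).
    by rewrite !mulr_gt0 // subr_gt0.
  - apply/subr0_eq; apply: (pmul_dot_eq0 _ _ _ e3).
    by rewrite mulr_gt0 // subr_gt0.
split; first by rewrite -PMw; exact: (proj_mem PM_proj).
by rewrite -PNw; exact: (proj_mem PN_proj).
Qed.

Context {PI : 'rV[R]_n -> 'rV[R]_n} (PI_proj : is_proj (TM `&` TN) PI).

Let TMN_sub := is_subspaceI TM_sub TN_sub.
HB.instance Definition _ := GRing.isLinear.Build R _ _ _ PI (proj_linear TMN_sub PI_proj).

Lemma avg_relax_sub_proj_linear : linear (fun v => avg_relax v - PI v).
Proof. exact: linearP (avg_relax \- PI). Qed.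

Lemma avg_relax_lt w :
  (forall z, TM z -> TN z -> dot w z = 0) -> w != 0 ->
  dot (avg_relax w) (avg_relax w) < dot w w.
Proof.
move=> w_orth w_neq0.
have pos_le a b : 0 < a <= b -> 0 <= a <= b by case/andP=> /ltW -> ->.
rewrite lt_neqAle avg_relax_le ?pos_le // andbT; apply: contra_neq w_neq0 => S_eq.
have [TMw TNw] := avg_relax_norm_eq w S_eq.
by apply/eqP; rewrite -dot_eq0 w_orth.
Qed.

Lemma avg_relax_sub_proj_lt1 v :
  dot v v <= 1 -> dot (avg_relax v - PI v) (avg_relax v - PI v) < 1.
Proof.
move=> v_le1; have [TMu TNu] : TM (PI v) /\ TN (PI v) by exact: proj_mem PI_proj v.
have w_orth z : TM z -> TN z -> dot (v - PI v) z = 0.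
  by move=> TMz TNz; apply: (proj_orth TMN_sub PI_proj).
have -> : avg_relax v - PI v = avg_relax (v - PI v).
  by rewrite linearB (avg_relax_id _ TMu TNu).
have dot_vE : dot v v = dot (v - PI v) (v - PI v) + dot (PI v) (PI v).
  by rewrite -[in LHS](subrK (PI v) v) (dot_add_orth _ _ (w_orth _ TMu TNu)).
have [-> | w_neq0] := eqVneq (v - PI v) 0; first by rewrite linear0 dot0l ltr01.
have := avg_relax_lt _ w_orth w_neq0; have := dot_ge0 (PI v); lra.
Qed.

End AveragedRelaxedProjections.

Section UnitBall.
Context {R : realType} {n : nat}.

Lemma sum_continuous {T : topologicalType} (I : finType) (F : I -> T -> R) :
  (forall i, continuous (F i)) -> continuous (fun x => \sum_i F i x).
Proof.
move=> F_cont; apply: (@continuous_big R^o I +%R 0 xpredT _ _ _ F) => //.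
exact: (@pseudometric_normed_Zmodule.add_continuous R R^o).
Qed.

Lemma enorm_comp_continuous {T : topologicalType} (f : T -> 'rV[R]_n) :
  (forall j, continuous (fun x => f x ord0 j)) -> continuous (fun x => enorm (f x)).
Proof.
move=> f_cont x.
have sq_cont : continuous (fun x => \sum_j f x ord0 j ^+ 2).
  by apply: sum_continuous => j y; exact: continuousM (f_cont j y) (f_cont j y).
by apply: (continuous_comp (sq_cont x)); exact: sqrt_continuous.
Qed.

Lemma linear_enorm_continuous (f : {linear 'rV[R]_n -> 'rV[R]_n}) :
  continuous (fun v => enorm (f v)).
Proof.
apply: enorm_comp_continuous => j.
have -> : (fun v => f v ord0 j) = (fun v => \sum_i v ord0 i * lin1_mx f i j).
  by apply: funext => v; rewrite -mul_rV_lin1 mxE.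
apply: sum_continuous => i v.
apply: (@continuousM R _ (fun v : 'rV[R]_n => v ord0 i) (fun=> lin1_mx f i j)).
  exact: coord_continuous.
exact: cst_continuous.
Qed.

Lemma unit_ball_compact : compact [set v : 'rV[R]_n | enorm v <= 1].
Proof.
pose cube := [set v : 'rV[R]_n | forall i, `[(-1 : R), 1]%classic (v ord0 i)].
apply: (@subclosed_compact _ _ cube).
- have enorm_cont : continuous (@enorm R n).
    by apply: (enorm_comp_continuous id) => j; exact: coord_continuous.
  rewrite (_ : [set v | enorm v <= 1] = @enorm R n @^-1` [set r | r <= 1]) //.
  by apply: preimage_closed; [move=> v _; exact: enorm_cont | exact: closed_le].
- exact: (@rV_compact _ n (fun=> `[(-1 : R), 1]%classic)
    (fun _ => @segment_compact R (-1) 1)).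
move=> v /=; rewrite enorm_le1 => v_le1 i.
have : v ord0 i ^+ 2 <= 1.
  apply: le_trans v_le1; rewrite /dot (bigD1 i) //= -expr2 lerDl.
  by apply: sumr_ge0 => j _; rewrite -expr2 sqr_ge0.
by rewrite /= in_itv /= => sq_le1; apply/andP; split; nra.
Qed.

End UnitBall.

Section LinearContraction.
Context {R : realType} {n : nat} {f : 'rV[R]_n -> 'rV[R]_n} (f_lin : linear f).

HB.instance Definition _ := GRing.isLinear.Build R _ _ _ f f_lin.

Lemma opnorm_lt1 : (forall v, enorm v <= 1 -> enorm (f v) < 1) -> opnorm f < 1.
Proof.
move=> f_lt1.
have ball0 : [set v : 'rV[R]_n | enorm v <= 1] !=set0.
  by exists 0; rewrite /= enorm_le1 dot0l ler01.
have [c ball_c c_max] := EVT_max_rV ball0 unit_ball_compact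
  (continuous_subspaceT (linear_enorm_continuous f)).
rewrite inE in ball_c; apply: le_lt_trans (f_lt1 c ball_c).
apply: ge_sup; first by exists (enorm (f 0)), 0 => //; rewrite /= enorm_le1 dot0l ler01.
by move=> _ [v ball_v <-]; apply: c_max; rewrite inE.
Qed.

End LinearContraction.

Theorem lemma6 (R : realType) (n k : nat) (alpha alpha1 alpha2 : R)
  (M N : set 'rV[R]_n) (xbar : 'rV[R]_n)
  (TM TN TMN : set 'rV[R]_n) (PM PN PI : 'rV[R]_n -> 'rV[R]_n) :
  (2 <= k)%N ->
  0 < alpha <= 1 -> 0 < alpha1 <= 2 -> 0 < alpha2 <= 2 ->
  ((alpha1 < 2 /\ alpha2 < 2) \/ (alpha < 1 /\ (alpha1 != 2 \/ alpha2 != 2))) ->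
  M xbar -> N xbar ->
  tangent_at k M xbar TM -> tangent_at k N xbar TN ->
  tangent_at k (M `&` N) xbar TMN ->
  TMN = TM `&` TN ->
  is_proj TM PM -> is_proj TN PN -> is_proj (TM `&` TN) PI ->
  opnorm (fun v => (alpha *: relax alpha2 PM (relax alpha1 PN v)
                    + (1 - alpha) *: v) - PI v) < 1.
Proof.
move=> _ al_range a1_range a2_range B1_or_B2 _ _ /tangent_at_subspace TM_sub
  /tangent_at_subspace TN_sub _ _ PM_proj PN_proj PI_proj.
apply: (opnorm_lt1 (avg_relax_sub_proj_linear TM_sub TN_sub PM_proj PN_proj
  alpha alpha1 alpha2 PI_proj)) => v.
rewrite enorm_le1 enorm_lt1; exact: avg_relax_sub_proj_lt1.
Qed.
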